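(* Let $\Delta:A\to A$ be a weak-2-local derivation on a C$^*$-algebra $A$. Suppose $p$ is a projection in $A$ and $b\in A$ satisfies $pb=bp=0$. Then $p\Delta(a+b)p=p\Delta(a)p$ for every $a\in A$. In particular, $p\Delta(a)p=p\Delta(a-(1-p)a(1-p))p$ for every $a\in A$.
   Context: Here $(1-p)a(1-p)=a-pa-ap+pap$ (computed in the unitization if $A$ is non-unital). A derivation on $A$ is a linear map $D:A\to A$ with $D(ab)=D(a)b+aD(b)$. A (not necessarily linear) map $\Delta:A\to A$ is a weak-2-local derivation if for every $a,b\in A$ and every $\phi\in A^*$ there exists a derivation $D_{a,b,\phi}:A\to A$ such that $\phi\Delta(a)=\phi D_{a,b,\phi}(a)$ and $\phi\Delta(b)=\phi D_{a,b,\phi}(b)$. *)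

From HB Require Import structures.
From mathcomp Require Import all_boot all_order all_algebra.
From mathcomp Require Import all_classical all_reals all_analysis.
From mathcomp Require Import complex.
Set Implicit Arguments. Unset Strict Implicit. Unset Printing Implicit Defensive.
Import Order.TTheory GRing.Theory Num.Theory.
Import numFieldNormedType.Exports.
Local Open Scope ring_scope.
Local Open Scope complex_scope.

Record is_Cstar_algebra (R : realType) (A : completeNormedModType R[i])
    (mul : A -> A -> A) (star : A -> A) : Prop := {
  cs_mulA : forall x y z, mul x (mul y z) = mul (mul x y) z;
  cs_mulDl : forall x y z, mul (x + y) z = mul x z + mul y z;
  cs_mulDr : forall x y z, mul x (y + z) = mul x y + mul x z;
  cs_mulZl : forall (k : R[i]) x y, mul (k *: x) y = k *: mul x y;
  cs_mulZr : forall (k : R[i]) x y, mul x (k *: y) = k *: mul x y;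
  cs_starK : forall x, star (star x) = x;
  cs_starD : forall x y, star (x + y) = star x + star y;
  cs_starZ : forall (k : R[i]) x, star (k *: x) = (k^*)%C *: star x;
  cs_starM : forall x y, star (mul x y) = mul (star y) (star x);
  cs_normM : forall x y, `|mul x y| <= `|x| * `|y|;
  cs_Cstar : forall x, `|mul (star x) x| = `|x| ^+ 2
}.

Definition is_derivation (R : realType) (A : completeNormedModType R[i])
    (mul : A -> A -> A) (D : A -> A) : Prop :=
  (forall x y, D (x + y) = D x + D y) /\
  (forall (k : R[i]) x, D (k *: x) = k *: D x) /\
  (forall x y, D (mul x y) = mul (D x) y + mul x (D y)).

Definition in_dual (R : realType) (A : completeNormedModType R[i])
    (phi : A -> R[i]) : Prop :=
  (forall x y, phi (x + y) = phi x + phi y) /\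
  (forall (k : R[i]) x, phi (k *: x) = k * phi x) /\
  continuous (phi : A -> (R[i] : numFieldType)).

Definition weak_2_local_derivation (R : realType) (A : completeNormedModType R[i])
    (mul : A -> A -> A) (Delta : A -> A) : Prop :=
  forall (a b : A) (phi : A -> R[i]), in_dual phi ->
    exists D : A -> A, is_derivation mul D /\
      phi (Delta a) = phi (D a) /\ phi (Delta b) = phi (D b).

Definition is_projection (R : realType) (A : completeNormedModType R[i])
    (mul : A -> A -> A) (star : A -> A) (p : A) : Prop :=
  star p = p /\ mul p p = p.

From HB Require Import structures.
From mathcomp Require Import all_boot all_order all_algebra.
From mathcomp Require Import all_classical all_reals all_analysis.
From mathcomp Require Import complex.
From mathcomp Require Import lra ring.
Import Order.TTheory GRing.Theory Num.Theory.
Import numFieldNormedType.Exports.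
Set Implicit Arguments. Unset Strict Implicit. Unset Printing Implicit Defensive.
Local Open Scope ring_scope.
Local Open Scope complex_scope.
Local Open Scope classical_set_scope.

(* For a functional phi in A^*, weak-2-locality at the pair (a + b, a) and at
   phi (p _ p) gives a derivation D with
   phi (p Delta(a + b) p - p Delta(a) p) = phi (p D(b) p), and
   p D(b) p = - p D(p) b p = 0 since D(pb) = D(p) b + p D(b) = 0 and bp = 0.
   The dual separates points (Hahn-Banach: Zorn's lemma on dominated graphs
   of real-linear functionals, then complexification g(y) - i g(iy)), which
   gives the first claim.  The second is the first one for
   b = (1 - p) a (1 - p), annihilated by p on both sides as p^2 = p. *)

Lemma additive_map0 (U W : zmodType) (f : U -> W) :
  {morph f : x y / x + y} -> f 0 = 0.
Proof. by move=> fD; apply: (addrI (f 0)); rewrite -fD !addr0. Qed.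

Lemma additive_mapN (U W : zmodType) (f : U -> W) :
  {morph f : x y / x + y} -> {morph f : x / - x}.
Proof.
by move=> fD x; apply/eqP; rewrite -addr_eq0 -fD addNr (additive_map0 fD).
Qed.

Section SublinearHahnBanach.
Variables (R : realType) (V : lmodType R[i]) (q : V -> R).
Hypothesis qD : forall u v, q (u + v) <= q u + q v.
Hypothesis qZ : forall (r : R) u, 0 <= r -> q (r%:C *: u) = r * q u.

Lemma sublinear0 : q 0 = 0.
Proof. by have := qZ 0 (lexx 0); rewrite scaler0 mul0r. Qed.

Lemma sublinearN u : - q u <= q (- u).
Proof. by rewrite -subr_ge0 opprK addrC -sublinear0 -(subrr u) qD. Qed.

Definition dominated_graph (G : set (V * R)) : Prop :=
  [/\ G (0, 0),
      (forall u a v b, G (u, a) -> G (v, b) -> G (u + v, a + b)),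
      (forall u a (r : R), G (u, a) -> G (r%:C *: u, r * a)) &
      (forall u a, G (u, a) -> a <= q u)].

Lemma dominated_graph_functional G u a b :
  dominated_graph G -> G (u, a) -> G (u, b) -> a = b.
Proof.
case=> _ GD GZ Gq; suff le_ab c d : G (u, c) -> G (u, d) -> c <= d.
  by move=> Ga Gb; apply/le_anti; rewrite !le_ab.
move=> Gc Gd; have := Gq _ _ (GD _ _ _ _ Gc (GZ _ _ (-1) Gd)).
by rewrite rmorphN1 scaleN1r subrr sublinear0 mulN1r subr_le0.
Qed.

Lemma dominated_graph_of_pairs U : U (0, 0) ->
  (forall z1 z2, U z1 -> U z2 ->
     exists2 H, dominated_graph H & [/\ H `<=` U, H z1 & H z2]) ->
  dominated_graph U.
Proof.
move=> U00 pairs; split=> //.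
- move=> u a v b Ua Ub; have [H [_ HD _ _] [HU Ha Hb]] := pairs _ _ Ua Ub.
  exact/HU/HD.
- move=> u a r Ua; have [H [_ _ HZ _] [HU Ha _]] := pairs _ _ Ua Ua.
  exact/HU/HZ.
- by move=> u a Ua; have [H [_ _ _ Hq] [_ Ha _]] := pairs _ _ Ua Ua; exact: Hq.
Qed.

Section OneStepExtension.
Variables (G : set (V * R)) (v : V).
Hypothesis domG : dominated_graph G.

(* The value at v must lie between a - q (u - v) and q (w + v) - b for all
   (u, a), (w, b) in G; we take the supremum of the lower bounds. *)
Definition extension_value : R :=
  sup [set z.2 - q (z.1 - v) | z in G].

Lemma extension_bounds u a w b : G (u, a) -> G (w, b) ->
  a - q (u - v) <= q (w + v) - b.
Proof.
case: domG => _ GD _ Gq Ga Gb; have := Gq _ _ (GD _ _ _ _ Ga Gb).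
rewrite -[u + w]addr0 -(addNr v) addrACA => le_q.
by rewrite lerBrDr addrAC lerBlDr [q _ + _]addrC (le_trans le_q).
Qed.

Lemma extension_value_ge u a : G (u, a) -> a - q (u - v) <= extension_value.
Proof.
have [G00 _ _ _] := domG; move=> Ga; apply: ub_le_sup; last by exists (u, a).
by exists (q (0 + v) - 0) => _ [[w b] Gwb <-]; exact: extension_bounds.
Qed.

Lemma extension_value_le w b : G (w, b) -> extension_value <= q (w + v) - b.
Proof.
have [G00 _ _ _] := domG; move=> Gb.
apply: ge_sup; first by exists (0 - q (0 - v)), (0, 0).
by move=> _ [[u a] Gua <-]; exact: extension_bounds.
Qed.

Definition extended_graph : set (V * R) :=
  [set z | exists u a (r : R),
     G (u, a) /\ z = (u + r%:C *: v, a + r * extension_value)].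

Lemma extended_graph_sup : G `<=` extended_graph.
Proof. by case=> u a Ga; exists u, a, 0; rewrite scale0r mul0r !addr0. Qed.

Lemma extended_graph_v : extended_graph (v, extension_value).
Proof.
by have [G00 _ _ _] := domG; exists 0, 0, 1; rewrite scale1r !add0r mul1r.
Qed.

Lemma extended_graph_dominated : dominated_graph extended_graph.
Proof.
have [G00 GD GZ Gq] := domG; split.
- exact: extended_graph_sup.
- move=> _ _ _ _ [u1 [a1 [r1 [G1 [-> ->]]]]] [u2 [a2 [r2 [G2 [-> ->]]]]].
  exists (u1 + u2), (a1 + a2), (r1 + r2); split; first exact: GD.
  by rewrite rmorphD scalerDl mulrDl; congr pair; rewrite addrACA.
- move=> _ _ r [u [a [r1 [G1 [-> ->]]]]].
  exists (r%:C *: u), (r * a), (r * r1); split; first exact: GZ.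
  by rewrite scalerDr scalerA rmorphM mulrDr mulrA.
- move=> _ _ [u [a [r [Gua [-> ->]]]]].
  have [r_gt0|r_lt0|<-] := ltrgtP 0 r.
  + have := extension_value_le (GZ _ _ r^-1 Gua).
    rewrite [_ + v](_ : _ = r^-1%:C *: (u + r%:C *: v)); last first.
      by rewrite scalerDr scalerA -rmorphM mulVf ?gt_eqF // scale1r.
    rewrite qZ ?invr_ge0 ?(ltW r_gt0) // => ev_le.
    have := ler_wpM2l (ltW r_gt0) ev_le.
    by rewrite mulrBr !mulrA mulfV ?gt_eqF // !mul1r; lra.
  + have := extension_value_ge (GZ _ _ (- r^-1) Gua).
    rewrite [_ - v](_ : _ = (- r^-1)%:C *: (u + r%:C *: v)); last first.
      rewrite scalerDr scalerA -rmorphM mulNr mulVf ?lt_eqF //.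
      by rewrite rmorphN1 scaleN1r.
    rewrite qZ ?oppr_ge0 ?invr_le0 ?(ltW r_lt0) // => ev_ge.
    have nr_ge0 : 0 <= - r by rewrite oppr_ge0 ltW.
    have := ler_wpM2l nr_ge0 ev_ge.
    by rewrite mulrBr !mulrA mulrNN mulfV ?lt_eqF // !mul1r; lra.
  + by rewrite scale0r mul0r !addr0; exact: Gq.
Qed.

End OneStepExtension.

Lemma dominated_graph_total_extension G0 : dominated_graph G0 ->
  exists G, [/\ dominated_graph G, G0 `<=` G & forall v, exists a, G (v, a)].
Proof.
(* Zorn's lemma is applied to the sets A with G0 `|` A dominated, so that the
   empty chain is admissible. *)
move=> domG0; pose P A := dominated_graph (G0 `|` A).
have [|A [PA Amax]] := @Zorn_bigcup _ P.
  move=> F FP Ftot; pose U := \bigcup_(X in F) X.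
  pose F0 X := X = set0 \/ F X.
  have member z : (G0 `|` U) z ->
      exists X, [/\ F0 X, P X, X `<=` U & (G0 `|` X) z].
    case=> [G0z|[X FX Xz]].
      by exists set0; rewrite /P setU0; split; [left | | exact: sub0set | ].
    by exists X; split; [right | exact: FP | exact: bigcup_sup | right].
  have nested X1 X2 : F0 X1 -> F0 X2 -> X1 `<=` X2 \/ X2 `<=` X1.
    move=> [->|FX1]; first by left; exact: sub0set.
    by move=> [->|FX2]; [right; exact: sub0set | exact: Ftot].
  apply: dominated_graph_of_pairs => [|z1 z2]; first by left; case: domG0.
  move=> /member [X1 [F0X1 PX1 X1U z1X1]] /member [X2 [F0X2 PX2 X2U z2X2]].
  have [X12|X21] := nested _ _ F0X1 F0X2.
  - exists (G0 `|` X2) => //.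
    by split; [exact: setUS | exact: setUS X12 _ _ | ].
  - exists (G0 `|` X1) => //.
    by split; [exact: setUS | | exact: setUS X21 _ _].
exists (G0 `|` A); split; [exact: PA | exact: subsetUl | ].
move=> v; exists (extension_value (G0 `|` A) v).
pose B := extended_graph (G0 `|` A) v.
have AB : A `<=` B by move=> z Az; apply: extended_graph_sup; right.
have [BA|nBA] := pselect (B `<=` A); first by right; apply/BA/extended_graph_v.
exfalso; apply: (Amax B); first by split.
rewrite /P setUidr; first exact: extended_graph_dominated.
by move=> z G0z; apply: extended_graph_sup; left.
Qed.

Definition line_graph (x0 : V) : set (V * R) :=
  range (fun t : R => (t%:C *: x0, t * q x0)).

Lemma line_graph_dominated x0 : dominated_graph (line_graph x0).
Proof.
split.
- by exists 0 => //; rewrite scale0r mul0r.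
- move=> _ _ _ _ [t1 _ [<- <-]] [t2 _ [<- <-]]; exists (t1 + t2) => //.
  by rewrite rmorphD scalerDl mulrDl.
- move=> _ _ r [t _ [<- <-]]; exists (r * t) => //.
  by rewrite rmorphM scalerA mulrA.
- move=> _ _ [t _ [<- <-]]; have [t_ge0|t_lt0] := leP 0 t; first by rewrite qZ.
  have nt_ge0 : 0 <= - t by rewrite oppr_ge0 ltW.
  rewrite -[t]opprK rmorphN scaleNr -scalerN qZ // mulNr -mulrN.
  by rewrite ler_wpM2l ?sublinearN.
Qed.

Theorem hahn_banach_sublinear x0 : exists g : V -> R,
  [/\ {morph g : u v / u + v}, (forall (r : R) u, g (r%:C *: u) = r * g u),
      (forall u, g u <= q u) & g x0 = q x0].
Proof.
have [G [domG lineG totG]] :=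
  dominated_graph_total_extension (line_graph_dominated x0).
have [g Gg] := choice totG; have [_ GD GZ Gq] := domG.
exists g; split.
- by move=> u v; apply: (dominated_graph_functional domG (Gg _)); apply: GD.
- by move=> r u; apply: (dominated_graph_functional domG (Gg _)); apply: GZ.
- by move=> u; apply: Gq.
- apply: (dominated_graph_functional domG (Gg _)); apply: lineG.
  by exists 1 => //; rewrite scale1r mul1r.
Qed.

End SublinearHahnBanach.

Lemma additive_bounded_continuous (K : numFieldType) (V W : normedModType K)
    (f : V -> W) (C : K) :
  {morph f : x y / x + y} -> 0 < C -> (forall y, `|f y| <= C * `|y|) ->
  continuous f.
Proof.
move=> fD C_gt0 fC x; apply/cvgrPdist_lt => e e_gt0.
have fB z : f x - f z = f (x - z) by rewrite -(additive_mapN fD) -fD.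
have near_x := (@cvgrPdist_lt _ _ _ (nbhs x) _ id x).1 cvg_id (e / C).
near=> z; rewrite fB (le_lt_trans (fC _)) // -ltr_pdivlMl // mulrC.
by near: z; apply: near_x; rewrite divr_gt0.
Unshelve. all: by end_near.
Qed.

Section ComplexNormedSpace.
Variables (R : realType) (V : normedModType R[i]).

Definition normR (u : V) : R := complex.Re `|u|.

Lemma normR_E u : `|u| = (normR u)%:C.
Proof. by rewrite /normR RRe_real // normr_real. Qed.

Lemma normRD u v : normR (u + v) <= normR u + normR v.
Proof. by rewrite -lecR rmorphD /= -!normR_E ler_normD. Qed.

Lemma normRZ (r : R) u : 0 <= r -> normR (r%:C *: u) = r * normR u.
Proof.
by move=> r_ge0; rewrite /normR normrZ ger0_norm ?lecR // normR_E -rmorphM.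
Qed.

Lemma normRN u : normR (- u) = normR u.
Proof. by rewrite /normR normrN. Qed.

Lemma normR_gt0 u : u != 0 -> 0 < normR u.
Proof. by rewrite -ltcR -normR_E normr_gt0. Qed.

Definition complexify (g : V -> R) (y : V) : R[i] :=
  (g y)%:C - 'i%C * (g ('i%C *: y))%:C.

Section Complexify.
Variable g : V -> R.
Hypothesis gD : {morph g : u v / u + v}.
Hypothesis gZ : forall (r : R) u, g (r%:C *: u) = r * g u.

Lemma complexifyD : {morph complexify g : u v / u + v}.
Proof. by move=> u v; rewrite /complexify scalerDr !gD !rmorphD /=; ring. Qed.

Lemma complexifyZ k u : complexify g (k *: u) = k * complexify g u.
Proof.
have real_scale (r : R) y : complexify g (r%:C *: y) = r%:C * complexify g y.
  rewrite /complexify.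
  have -> : 'i%C *: (r%:C *: y) = r%:C *: ('i%C *: y) by rewrite !scalerA mulrC.
  by rewrite !gZ !rmorphM /=; ring.
have i2 : 'i%C * 'i%C = -1 :> R[i] by rewrite -expr2 sqr_i.
have i_scale y : complexify g ('i%C *: y) = 'i%C * complexify g y.
  rewrite /complexify scalerA i2 -(rmorphN1 (real_complex R)) gZ.
  by rewrite mulN1r rmorphN /= mulrBr mulrA i2; ring.
rewrite [k]complexE scalerDl -scalerA complexifyD i_scale !real_scale.
by rewrite mulrDl mulrA.
Qed.

Lemma complexify_Re u : complex.Re (complexify g u) = g u.
Proof. by rewrite /complexify /= !mul0r !mul1r subr0 subr0. Qed.

End Complexify.

Lemma normc_real (r : R) : `|r%:C| = `|r|%:C :> R[i].
Proof. by rewrite normc_def /= expr0n addr0 sqrtr_sqr. Qed.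

Lemma normRiZ u : normR ('i%C *: u) = normR u.
Proof. by rewrite /normR normrZ normCi mul1r. Qed.

Theorem hahn_banach_normed x0 : x0 != 0 -> exists f : V -> R[i],
  [/\ {morph f : x y / x + y}, (forall k x, f (k *: x) = k * f x),
      (forall y, `|f y| <= 2 * `|y|) & f x0 != 0].
Proof.
move=> x0_neq0.
have [g [gD gZ g_le g_x0]] := hahn_banach_sublinear normRD normRZ x0.
have g_bound u : `|g u| <= normR u.
  by rewrite ler_norml g_le andbT lerNl -normRN -(additive_mapN gD) g_le.
exists (complexify g); split.
- exact: complexifyD.
- exact: complexifyZ.
- move=> y; rewrite (le_trans (ler_normB _ _)) // normrM normCi mul1r.
  rewrite !normc_real mulr_natl mulr2n normR_E.
  by apply: lerD; rewrite lecR // -(normRiZ y).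
- apply/eqP => /(congr1 (@complex.Re R)); rewrite complexify_Re g_x0 /=.
  by apply/eqP; rewrite gt_eqF ?normR_gt0.
Qed.

End ComplexNormedSpace.

Lemma dual_separates_points (R : realType) (A : completeNormedModType R[i])
    (x : A) :
  (forall phi, in_dual phi -> phi x = 0) -> x = 0.
Proof.
move=> dual0; apply/eqP; apply: contraT => x_neq0.
have [f [fD fZ fB fx]] := hahn_banach_normed x_neq0.
move: fx; rewrite dual0 ?eqxx //; split=> //; split=> //.
apply: (@additive_bounded_continuous _ _ (R[i] : numFieldType) _ 2 fD _ fB).
by rewrite ltr0n.
Qed.

Section Corners.
Variables (R : realType) (A : completeNormedModType R[i]) (mul : A -> A -> A).
Hypothesis mulA : forall x y z, mul x (mul y z) = mul (mul x y) z.
Hypothesis mulDl : forall x y z, mul (x + y) z = mul x z + mul y z.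
Hypothesis mulDr : forall x y z, mul x (y + z) = mul x y + mul x z.
Hypothesis mulZl : forall (k : R[i]) x y, mul (k *: x) y = k *: mul x y.
Hypothesis mulZr : forall (k : R[i]) x y, mul x (k *: y) = k *: mul x y.
Hypothesis normM : forall x y, `|mul x y| <= `|x| * `|y|.

Let mulNl x y : mul (- x) y = - mul x y.
Proof. exact: (additive_mapN (fun u v => mulDl u v y)). Qed.

Let mulNr x y : mul x (- y) = - mul x y.
Proof. exact: (additive_mapN (mulDr x)). Qed.

Definition corner (p z : A) : A := mul (mul p z) p.

Lemma cornerD p : {morph corner p : x y / x + y}.
Proof. by move=> x y; rewrite /corner mulDr mulDl. Qed.

Lemma corner_continuous p : continuous (corner p).
Proof.
have C_gt0 : 0 < `|p| * `|p| + 1 by rewrite ltr_pwDr ?mulr_ge0.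
apply: (additive_bounded_continuous (cornerD p) C_gt0) => y.
rewrite mulrDl mul1r (le_trans (normM _ _)) // ler_wpDr //.
by rewrite mulrAC ler_wpM2r ?normM.
Qed.

Lemma in_dual_corner p phi : in_dual phi -> in_dual (phi \o corner p).
Proof.
case=> phiD [phiZ phi_cont].
split; first by move=> x y /=; rewrite cornerD phiD.
split; first by move=> k x /=; rewrite /corner mulZr mulZl phiZ.
move=> z; apply: continuous_comp; first exact: corner_continuous.
exact: phi_cont.
Qed.

Lemma derivation_corner_annihilator D p b : is_derivation mul D ->
  mul p b = 0 -> mul b p = 0 -> corner p (D b) = 0.
Proof.
case=> DD [_ DM] pb bp.
have pDb : mul p (D b) = - mul (D p) b.
  by apply/eqP; rewrite -addr_eq0 addrC -DM pb (additive_map0 DD).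
by rewrite /corner pDb -mulNl -mulA bp (additive_map0 (mulDr _)).
Qed.

Lemma weak_2_local_corner_add Delta p b : weak_2_local_derivation mul Delta ->
  mul p b = 0 -> mul b p = 0 ->
  forall a, corner p (Delta (a + b)) = corner p (Delta a).
Proof.
move=> W2 pb bp a; apply/eqP; rewrite -subr_eq0; apply/eqP.
apply: dual_separates_points => phi phi_dual; have [phiD _] := phi_dual.
have [D [derD [Dab Da]]] := W2 (a + b) a _ (in_dual_corner p phi_dual).
have [DD _] := derD; rewrite phiD (additive_mapN phiD).
have -> : phi (corner p (Delta (a + b))) =
          phi (corner p (D a)) + phi (corner p (D b)).
  by rewrite [LHS]Dab /= DD cornerD phiD.
rewrite [phi (corner p (Delta a))]Da (derivation_corner_annihilator derD pb bp).
by rewrite (additive_map0 phiD) addr0 subrr.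
Qed.

Definition corner_complement (p a : A) : A :=
  a - mul p a - mul a p + mul (mul p a) p.

Lemma corner_complement_annihilated p a : mul p p = p ->
  mul p (corner_complement p a) = 0 /\ mul (corner_complement p a) p = 0.
Proof.
move=> pp; split.
- by rewrite /corner_complement !mulDr !mulNr !mulA pp subrr sub0r addNr.
- rewrite /corner_complement !mulDl !mulNl -!mulA pp !mulA.
  by rewrite [X in X + _]addrAC subrr sub0r addNr.
Qed.

End Corners.

Theorem lemma3p2 (R : realType) (A : completeNormedModType R[i])
    (mul : A -> A -> A) (star : A -> A) (Delta : A -> A) (p b : A) :
  is_Cstar_algebra mul star ->
  weak_2_local_derivation mul Delta ->
  is_projection mul star p ->
  mul p b = 0 -> mul b p = 0 ->
  (forall a : A, mul (mul p (Delta (a + b))) p = mul (mul p (Delta a)) p) /\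
  (forall a : A,
     mul (mul p (Delta a)) p =
     mul (mul p (Delta (a - (a - mul p a - mul a p + mul (mul p a) p)))) p).
Proof.
move=> CS W2 [_ pp] pb bp.
have corner_add := weak_2_local_corner_add (cs_mulA CS) (cs_mulDl CS)
  (cs_mulDr CS) (cs_mulZl CS) (cs_mulZr CS) (cs_normM CS) W2.
split=> [|a]; first exact: corner_add.
have [pc cp] := corner_complement_annihilated (cs_mulA CS) (cs_mulDl CS)
  (cs_mulDr CS) a pp.
have := corner_add _ _ pc cp (a - corner_complement mul p a).
by rewrite subrK.
Qed.
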